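(* Let $m\ge2$, $n\ge1$. An $m$-uniform multi-hypergraph $\mathcal{P}=([n],\mathbb{E})$ is a cp multi-hypergraph if and only if it has Property R.
   Context: $S(m,n)=\{(i_1,\dots,i_m): i_k\in[n]\}$. For a tuple or multiset $\eta=\{i_1,\dots,i_m\}$, its base $B(\eta)$ is the set of distinct elements among $i_1,\dots,i_m$, and $M(\eta)$ is the multiset formed by the entries of a tuple $\eta$. An $m$-uniform multi-hypergraph on $[n]$ is a pair $([n],\mathbb{E})$ with $\mathbb{E}$ a set of multisets of elements of $[n]$, each of cardinality $m$ counting repetitions. A symmetric real tensor $\mathcal{A}=(a_{i_1\cdots i_m})$ of order $m$ and dimension $n$ is an associated tensor of $\mathcal{P}$ if for every $(i_1,\dots,i_m)\in S(m,n)$, $a_{i_1\cdots i_m}\neq0$ when the multiset $\{i_1,\dots,i_m\}\in\mathbb{E}$ and $a_{i_1\cdots i_m}=0$ otherwise. For $\mathbf{u}\in\mathbb{R}^n$, $\mathbf{u}^m$ is the tensor with entries $u_{i_1}\cdots u_{i_m}$. A symmetric tensor $\mathcal{A}$ is $\{0,1\}$-cp if $\mathcal{A}=\sum_{j=1}^q\mathbf{u}_j^m$ for some $q\ge1$ and $\mathbf{u}_j\in\{0,1\}^n$ (such a tensor need not have entries in $\{0,1\}$). $\mathcal{P}$ is a cp multi-hypergraph if it has an associated tensor that is $\{0,1\}$-cp. For $\alpha\in\mathbb{E}$, $\mathcal{D}_\alpha=\{\eta\in S(m,n): B(\eta)\subseteq B(\alpha)\}$; $\mathcal{P}$ has Property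 R if for every $\alpha\in\mathbb{E}$ and every $\eta\in\mathcal{D}_\alpha$, the multiset $M(\eta)$ belongs to $\mathbb{E}$. *)

From HB Require Import structures.
From mathcomp Require Import all_boot all_order all_algebra.
Set Implicit Arguments. Unset Strict Implicit. Unset Printing Implicit Defensive.
Import Order.TTheory GRing.Theory Num.Theory.

Definition mset (n : nat) := {ffun 'I_n -> nat}.

Definition mcard n (a : mset n) : nat := \sum_(i < n) a i.

Definition Mof m n (eta : m.-tuple 'I_n) : mset n := [ffun i => count_mem i eta].

Definition Bm n (a : mset n) : pred 'I_n := fun i => (0 < a i)%N.

Definition Bt m n (eta : m.-tuple 'I_n) : pred 'I_n := fun i => i \in eta.

Definition uniform_mhg (m n : nat) (E : pred (mset n)) : Prop :=
  forall a, E a -> mcard a = m.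

Definition tensor (R : Type) (m n : nat) := m.-tuple 'I_n -> R.

Definition symmetric_tensor (R : Type) m n (A : tensor R m n) : Prop :=
  forall s t : m.-tuple 'I_n, perm_eq s t -> A s = A t.

Definition associated_tensor (R : nzRingType) m n (E : pred (mset n)) (A : tensor R m n) : Prop :=
  symmetric_tensor A /\
  forall t : m.-tuple 'I_n, (A t != 0)%R <-> E (Mof t).

Definition tpow (R : nzRingType) m n (u : 'I_n -> R) : tensor R m n :=
  fun t => (\prod_(k < m) u (tnth t k))%R.

Definition zo_cp (R : nzRingType) m n (A : tensor R m n) : Prop :=
  exists q : nat, (1 <= q)%N /\
  exists u : 'I_q -> 'I_n -> R,
    (forall j i, (u j i = 0 \/ u j i = 1)%R) /\
    forall t, (A t = \sum_(j < q) tpow (u j) t)%R.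

Definition cp_mhg (R : nzRingType) m n (E : pred (mset n)) : Prop :=
  exists A : tensor R m n, associated_tensor E A /\ zo_cp A.

Definition propertyR m n (E : pred (mset n)) : Prop :=
  forall a, E a -> forall eta : m.-tuple 'I_n,
    {subset Bt eta <= Bm a} -> E (Mof eta).

From mathcomp Require Import all_boot all_order all_algebra.
Set Implicit Arguments. Unset Strict Implicit. Unset Printing Implicit Defensive.
Import Order.TTheory GRing.Theory Num.Theory.

(* For {0,1}-vectors u_j, the entry of sum_j u_j^m at a tuple t is nonzero
   exactly when the support of some u_j contains the base B(t).  So the
   nonzero pattern of a {0,1}-cp tensor is closed under shrinking bases,
   which is Property R.  Conversely, summing the m-th powers of the
   indicators of the bases of all edges gives a {0,1}-cp tensor whose
   nonzero entries are the tuples with base inside the base of an edge;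
   by Property R these are exactly the edges. *)

Lemma Mof_onto m n (a : mset n) : mcard a = m -> exists t : m.-tuple 'I_n, Mof t = a.
Proof.
move=> card_a.
pose s := flatten [seq nseq (a i) i | i <- enum 'I_n].
have count_s x : count_mem x s = a x.
  rewrite /s count_flatten -map_comp sumnE big_map.
  rewrite (eq_bigr (fun i => (i == x) * a i)); last first.
    by move=> i _; rewrite /= count_nseq mulnC.
  rewrite big_enum /= (bigD1 x) //= eqxx mul1n big1 ?addn0 // => i /negbTE ->.
  by rewrite mul0n.
have size_s : size s == m.
  rewrite -card_a /s size_flatten /shape -map_comp sumnE big_map big_enum /mcard /=.
  by apply/eqP/eq_bigr => i _; rewrite size_nseq.
by exists (Tuple size_s); apply/ffunP => x; rewrite ffunE /= count_s.
Qed.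

Lemma Bt_Mof m n (t : m.-tuple 'I_n) : Bt t =1 Bm (Mof t).
Proof. by move=> i; rewrite /Bt /Bm ffunE -has_count has_pred1. Qed.

Local Open Scope ring_scope.

Section RankOne.

Variables (R : comNzRingType) (m n : nat).

Lemma tpow_perm (u : 'I_n -> R) (s t : m.-tuple 'I_n) :
  perm_eq s t -> tpow u s = tpow u t.
Proof.
move=> st; rewrite /tpow -(big_tuple _ _ s xpredT u) -(big_tuple _ _ t xpredT u).
exact: perm_big.
Qed.

Lemma tpow_zo (u : 'I_n -> R) (t : m.-tuple 'I_n) :
  (forall i, u i = 0 \/ u i = 1) ->
  tpow u t = [forall k, u (tnth t k) == 1]%:R.
Proof.
move=> u01; rewrite /tpow; case: forallP => [u1 | /forallP].
  by apply: big1 => k _; apply/eqP.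
rewrite negb_forall => /existsP [k uk_neq1].
rewrite (bigD1 k) //=; case: (u01 (tnth t k)) => uk; last by rewrite uk eqxx in uk_neq1.
by rewrite uk mul0r.
Qed.

End RankOne.

Lemma sum_tpow_zo_neq0 (R : numDomainType) q m n (u : 'I_q -> 'I_n -> R)
    (t : m.-tuple 'I_n) :
  (forall j i, u j i = 0 \/ u j i = 1) ->
  (\sum_(j < q) tpow (u j) t != 0) = [exists j, [forall k, u j (tnth t k) == 1]].
Proof.
move=> u01; rewrite psumr_eq0; last by move=> j _; rewrite tpow_zo ?ler0n.
rewrite -has_predC; apply/hasP/existsP => [[j _] | [j uj1]].
  by rewrite /= tpow_zo // pnatr_eq0 eqb0 negbK; exists j.
by exists j; rewrite ?mem_index_enum //= tpow_zo // uj1 oner_eq0.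
Qed.

Lemma cp_mhg_propertyR (R : numDomainType) m n (E : pred (mset n)) :
  uniform_mhg m E -> cp_mhg R m E -> propertyR m E.
Proof.
move=> unifE [A [[_ A_neq0] [q [_ [u [u01 A_sum]]]]]] a Ea eta base_eta.
have [t Mt] := Mof_onto (unifE a Ea).
have /A_neq0 : E (Mof t) by rewrite Mt.
rewrite A_sum sum_tpow_zo_neq0 // => /existsP [j /forallP uj_t].
apply/A_neq0; rewrite A_sum sum_tpow_zo_neq0 //.
apply/existsP; exists j; apply/forallP => k.
have : Bt t (tnth eta k) by rewrite Bt_Mof Mt; apply/base_eta/mem_tnth.
by case/tnthP => k' ->.
Qed.

Section EdgeTensor.

Variables (R : numDomainType) (m n : nat) (E : pred (mset n)).

(* Indexed by all m-tuples rather than by the edges themselves: the vector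
   attached to t is zero unless M(t) is an edge. *)
Definition edge_indicator (t : m.-tuple 'I_n) (i : 'I_n) : R :=
  (E (Mof t) && (i \in t))%:R.

Definition edge_tensor : tensor R m n :=
  fun s => \sum_(j < #|{: m.-tuple 'I_n}|) tpow (edge_indicator (enum_val j)) s.

Lemma edge_indicator_zo t i : edge_indicator t i = 0 \/ edge_indicator t i = 1.
Proof. by rewrite /edge_indicator; case: (_ && _); [right | left]. Qed.

Lemma edge_tensor_zo_cp : (0 < n)%N -> zo_cp edge_tensor.
Proof.
move=> n_gt0; exists #|{: m.-tuple 'I_n}|; split.
  by rewrite card_tuple card_ord expn_gt0 n_gt0.
by exists (fun j => edge_indicator (enum_val j)); split=> // j i; apply: edge_indicator_zo.
Qed.

Lemma edge_tensor_symmetric : symmetric_tensor edge_tensor.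
Proof. by move=> s t st; apply: eq_bigr => j _; apply: tpow_perm. Qed.

Lemma edge_tensor_neq0 (s : m.-tuple 'I_n) :
  (0 < m)%N -> propertyR m E -> edge_tensor s != 0 <-> E (Mof s).
Proof.
move=> m_gt0 PR_E; rewrite sum_tpow_zo_neq0; last by move=> j i; apply: edge_indicator_zo.
split => [/existsP [j /forallP covers] | Es].
  have indicator1 k : E (Mof (enum_val j)) && (tnth s k \in enum_val j).
    by have := covers k; rewrite pnatr_eq1 eqb1.
  case/andP: (indicator1 (Ordinal m_gt0)) => E_j _.
  apply: (PR_E _ E_j) => i /tnthP [k ->].
  by rewrite -topredE /= -Bt_Mof; case/andP: (indicator1 k).
apply/existsP; exists (enum_rank s); apply/forallP => k.
by rewrite /edge_indicator enum_rankK Es mem_tnth.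
Qed.

End EdgeTensor.

Theorem mainTheorem6 (R : realFieldType) (m n : nat) (hm : (2 <= m)%N) (hn : (1 <= n)%N)
  (E : pred (mset n)) (hE : uniform_mhg m E) :
  cp_mhg R m E <-> propertyR m E.
Proof.
split; first exact: cp_mhg_propertyR.
move=> PR_E; exists (edge_tensor R E); split; last exact: edge_tensor_zo_cp.
split; first exact: edge_tensor_symmetric.
by move=> s; apply: edge_tensor_neq0 => //; apply: leq_trans hm.
Qed.
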